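(* There exists a cubic (3-regular) bipartite graph on 20 vertices that is not B-factorizable; in fact there is an additional generator $v\in\overline{\mathbf N}(PM(V))\cap\mathrm{problem}(V)$ with $2v\in\mathbf N(PM(V))$ such that $E(v)$ is such a cubic bipartite graph.
   Context: Let $V$ be a finite set with $|V|$ even. $K=\binom{V}{2}$ is the set of 2-element subsets of $V$. An equal partition of $V$ is an unordered pair $\{H,A\}$ of disjoint subsets with $H\cup A=V$ and $|H|=|A|=|V|/2$; $C=C(V)$ is the set of equal partitions. For $c=\{H,A\}\in C$, $B_c$ is the complete bipartite graph with parts $H$ and $A$. Vectors live in $\mathbb N^{K\cup C}$ with $\mathbb N=\{0,1,2,\dots\}$; $v|_K$ denotes the restriction to coordinates in $K$. For $E\subseteq K$, $\chi_E\in\{0,1\}^K$ is its indicator vector; $\chi_K$ is the all-ones vector on $K$. For $E\subseteq K$ and $c\in C$, $\chi_{E,c}\in\mathbb N^{K\cup C}$ has $K$-components $\chi_E$ and $C$-components equal to the indicator of $c$. $PM(V)=\{\chi_{q,c}: c\in C,\ q\text{ a perfect matching of }B_c\}$. For $\mathcal M\subseteq\mathbb N^{K\cup C}$, $\mathbf N(\mathcal M)$ is the set of finite nonnegative integer combinations of elements of $\mathcal M$, and $\overline{\mathbf N}(\mathcal M)=\{v\in\mathbb N^{K\cup C}: kv\in\mathbf N(\mathcal M)\text{ for some integer }k\ge1\}$. For $v\in\mathbb N^{K\cup C}$, $E(v)=\{e\in K: v(e)=1\}$. $\mathrm{problem}(V)$ is the set of $v\in\mathbb N^{K\cup C}$ such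 that $v|_K\le\chi_K$, the graph $(V,E(v))$ is regular, and $\frac{|V|}{2}\sum_{c\in C}v(c)=\sum_{e\in K}v(e)$. A regular graph $G=(V,E)$ is B-factorizable if every $v\in\overline{\mathbf N}(PM(V))$ with $v|_K=\chi_E$ belongs to $\mathbf N(PM(V))$. The monoid $\overline{\mathbf N}(PM(V))$ is pointed, hence has a unique inclusion-minimal generating set (as a monoid), its Hilbert basis. An additional generator is an element of the Hilbert basis of $\overline{\mathbf N}(PM(V))$ that does not belong to $PM(V)$. *)

From mathcomp Require Import all_boot.
Set Implicit Arguments. Unset Strict Implicit. Unset Printing Implicit Defensive.

Section Defs.
Variable V : finType.

Definition edge := {e : {set V} | #|e| == 2}.

(* C = equal partitions {H, A}, encoded as the 2-element set of sets [set H; ~: H]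
   with |H| = |V|/2 *)
Definition is_eqpart (c : {set {set V}}) : bool :=
  [exists H : {set V}, (c == [set H; ~: H]) && (#|H|.*2 == #|V|)].
Definition eqpart := {c : {set {set V}} | is_eqpart c}.

(* vectors in N^(K u C) *)
Definition vec := ({ffun edge -> nat} * {ffun eqpart -> nat})%type.

Definition vzero : vec := ([ffun => 0], [ffun => 0]).
Definition vadd (u w : vec) : vec :=
  ([ffun e => u.1 e + w.1 e], [ffun c => u.2 c + w.2 c]).
Definition vscale (k : nat) (u : vec) : vec :=
  ([ffun e => k * u.1 e], [ffun c => k * u.2 c]).

Definition is_pm (c : eqpart) (q : {set edge}) : bool :=
  [forall e in q, forall P in val c, #|val e :&: P| == 1] &&
  [forall x : V, #|[set e in q | x \in val e]| == 1].

Definition chiEc (E : {set edge}) (c : eqpart) : vec :=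
  ([ffun e => nat_of_bool (e \in E)], [ffun c' => nat_of_bool (c' == c)]).

Definition PM (u : vec) : Prop := exists c q, is_pm c q /\ u = chiEc q c.

Inductive Ncomb (M : vec -> Prop) : vec -> Prop :=
| Ncomb0 : Ncomb M vzero
| NcombS m u : M m -> Ncomb M u -> Ncomb M (vadd m u).

Definition Nbar (M : vec -> Prop) (u : vec) : Prop :=
  exists k, 0 < k /\ Ncomb M (vscale k u).

Definition generates (Mon H : vec -> Prop) : Prop :=
  (forall u, H u -> Mon u) /\ (forall u, Mon u <-> Ncomb H u).

(* u belongs to the (unique) inclusion-minimal generating set of Mon *)
Definition in_hilbert_basis (Mon : vec -> Prop) (u : vec) : Prop :=
  exists H : vec -> Prop,
    generates Mon H /\
    (forall H' : vec -> Prop, (forall w, H' w -> H w) -> generates Mon H' ->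
       forall w, H w -> H' w) /\
    H u.

Definition additional_generator (u : vec) : Prop :=
  in_hilbert_basis (Nbar PM) u /\ ~ PM u.

Definition Ev (u : vec) : {set edge} := [set e | u.1 e == 1].

Definition deg (E : {set edge}) (x : V) : nat := #|[set e in E | x \in val e]|.
Definition regular (E : {set edge}) : Prop := forall x y, deg E x = deg E y.
Definition cubic (E : {set edge}) : Prop := forall x, deg E x = 3.
Definition bipartite (E : {set edge}) : Prop :=
  exists S : {set V}, forall e, e \in E -> #|val e :&: S| = 1.

Definition problem (u : vec) : Prop :=
  (forall e, u.1 e <= 1) /\ regular (Ev u) /\
  (#|V| %/ 2) * (\sum_(c : eqpart) u.2 c) = \sum_(e : edge) u.1 e.

Definition chiE (E : {set edge}) : {ffun edge -> nat} :=
  [ffun e => nat_of_bool (e \in E)].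

Definition Bfactorizable (E : {set edge}) : Prop :=
  forall u, Nbar PM u -> u.1 = chiE E -> Ncomb PM u.

End Defs.

From mathcomp Require Import all_boot zify.
From Stdlib Require Import Classical.
Set Implicit Arguments. Unset Strict Implicit. Unset Printing Implicit Defensive.

(* We exhibit an explicit vector v in N^(K u C) over V = {0,...,19}: its edge
   part is the indicator of a cubic bipartite graph E with 30 edges, and its
   partition part is the indicator of three equal partitions c_0, c_1, c_2.
   Six explicit perfect matchings (two inside each B_{c_t}) add up to 2 v,
   so v lies in Nbar(PM(V)) and v belongs to problem(V).

   The main point is that v is irreducible in Nbar(PM(V)).  Any summand a of
   v can be split along the partitions into edge-weight tables (Section
   PartitionSplit); if v = a + b with a, b nonzero, one summand carries exactly
   one partition c_i, and combining the tables of a and b yields a scaled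
   3 x 30 table that is integral on row i.  A reflective unit-propagation
   refuter (Section UnitPropagation) certifies that no such table exists.
   Irreducible elements lie in the Hilbert basis (Section VectorMonoid), and
   an irreducible element outside PM(V) is not an N-combination of PM(V);
   hence v is an additional generator and E(v) is not B-factorizable. *)

Section VectorMonoid.
Variable V : finType.
Implicit Types (u w a b : vec V) (M : vec V -> Prop).

Lemma vecP u w : (forall e, u.1 e = w.1 e) -> (forall c, u.2 c = w.2 c) -> u = w.
Proof. by case: u w => u1 u2 [w1 w2] /= h1 h2; congr (_, _); apply/ffunP. Qed.

Lemma vadd0l u : vadd (vzero V) u = u.
Proof. by apply: vecP => x; rewrite /= !ffunE. Qed.

Lemma vadd0r u : vadd u (vzero V) = u.
Proof. by apply: vecP => x; rewrite /= !ffunE addn0. Qed.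

Lemma vaddA a b u : vadd (vadd a b) u = vadd a (vadd b u).
Proof. by apply: vecP => x; rewrite /= !ffunE addnA. Qed.

Lemma vaddC a b : vadd a b = vadd b a.
Proof. by apply: vecP => x; rewrite /= !ffunE addnC. Qed.

Lemma vscaleE k u :
  (forall e, (vscale k u).1 e = k * u.1 e) /\ (forall c, (vscale k u).2 c = k * u.2 c).
Proof. by split=> x; rewrite ffunE. Qed.

Lemma vscale1 u : vscale 1 u = u.
Proof. by apply: vecP => x; rewrite /= !ffunE mul1n. Qed.

Lemma vscaleS k u : vscale k.+1 u = vadd u (vscale k u).
Proof. by apply: vecP => x; rewrite /= !ffunE mulSn. Qed.

Lemma vscaleD k a b : vscale k (vadd a b) = vadd (vscale k a) (vscale k b).
Proof. by apply: vecP => x; rewrite /= !ffunE mulnDr. Qed.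

Lemma vscaleM k l u : vscale k (vscale l u) = vscale (k * l) u.
Proof. by apply: vecP => x; rewrite /= !ffunE mulnA. Qed.

Lemma Ncomb_add M a b : Ncomb M a -> Ncomb M b -> Ncomb M (vadd a b).
Proof.
elim=> [|m u Mm _ IH] Nb; first by rewrite vadd0l.
by rewrite vaddA; apply: NcombS => //; apply: IH.
Qed.

Lemma Ncomb_scale M k u : Ncomb M u -> Ncomb M (vscale k u).
Proof.
move=> Nu; elim: k => [|k IH]; last by rewrite vscaleS; apply: Ncomb_add.
have -> : vscale 0 u = vzero V by apply: vecP => x; rewrite /= !ffunE.
exact: Ncomb0.
Qed.

Lemma Ncomb_single M m : M m -> Ncomb M m.
Proof. by move=> Mm; rewrite -(vadd0r m); apply: NcombS => //; apply: Ncomb0. Qed.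

Lemma Nbar_of_Ncomb M u : Ncomb M u -> Nbar M u.
Proof. by move=> Nu; exists 1; rewrite vscale1. Qed.

Lemma Nbar0 M : Nbar M (vzero V).
Proof. exact/Nbar_of_Ncomb/Ncomb0. Qed.

Lemma Nbar_add M a b : Nbar M a -> Nbar M b -> Nbar M (vadd a b).
Proof.
move=> [k [k0 Na]] [l [l0 Nb]]; exists (k * l); split; first by rewrite muln_gt0 k0.
rewrite vscaleD; apply: Ncomb_add; last by rewrite -vscaleM; apply: Ncomb_scale.
by rewrite mulnC -vscaleM; apply: Ncomb_scale.
Qed.

(* The total mass of a vector, a measure that is additive and vanishes only
   at zero; it drives the induction showing that irreducibles generate. *)
Definition vsize u := \sum_e u.1 e + \sum_c u.2 c.

Lemma vsizeD a b : vsize (vadd a b) = vsize a + vsize b.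
Proof.
rewrite /vsize /= (eq_bigr (fun e => a.1 e + b.1 e)) => [|e _]; last by rewrite ffunE.
rewrite (eq_bigr (fun c => a.2 c + b.2 c)) => [|c _]; last by rewrite ffunE.
by rewrite !big_split /= addnACA.
Qed.

Lemma vsize_eq0 u : vsize u = 0 -> u = vzero V.
Proof.
move/eqP; rewrite addn_eq0 !sum_nat_eq0 => /andP[/forallP h1 /forallP h2].
by apply: vecP => x; rewrite /= ffunE; apply/eqP; [apply: h1 | apply: h2].
Qed.

Definition irreducible M u :=
  [/\ Nbar M u, u <> vzero V &
      forall a b, Nbar M a -> Nbar M b -> u = vadd a b -> a = vzero V \/ b = vzero V].

Lemma irreducibles_generate M w : Nbar M w -> Ncomb (irreducible M) w.
Proof.
elim: {w}(vsize w) {-2}w (leqnn (vsize w)) => [|n IH] w.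
  by rewrite leqn0 => /eqP /vsize_eq0 -> _; apply: Ncomb0.
move=> size_w Nw; have [->|w0] := classic (w = vzero V); first exact: Ncomb0.
have [irr_w|not_irr] := classic (irreducible M w); first exact: Ncomb_single.
have [a [b [Na Nb Ew a0 b0]]] : exists a b,
    [/\ Nbar M a, Nbar M b, w = vadd a b, a <> vzero V & b <> vzero V].
  apply: NNPP => no_split; apply: not_irr; split=> // a b Na Nb Ew.
  by apply: NNPP => /not_or_and [a0 b0]; apply: no_split; exists a, b.
have sa : 0 < vsize a by rewrite lt0n; apply/eqP => /vsize_eq0.
have sb : 0 < vsize b by rewrite lt0n; apply/eqP => /vsize_eq0.
have := vsizeD a b; rewrite -Ew => sw.
by rewrite Ew; apply: Ncomb_add; apply: IH => //; lia.
Qed.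

(* The irreducibles generate Nbar M, and any generating set made of
   irreducibles contains all of them (an irreducible element can only be
   written as a sum of generators in a trivial way); hence they form the
   inclusion-minimal generating set, the Hilbert basis. *)
Lemma irreducible_in_hilbert_basis M u :
  irreducible M u -> in_hilbert_basis (Nbar M) u.
Proof.
move=> irr_u; exists (irreducible M); split; last split => //.
  split=> [w [] // | w]; split; first exact: irreducibles_generate.
  elim=> [|m w' [Nm _ _] _ IH]; [exact: Nbar0 | exact: Nbar_add].
move=> H' sub [H'M H'gen] w [Nw w0 split_w].
have Nw' : Ncomb H' w by apply/H'gen.
move: w0 split_w; case: Nw' => [/(_ erefl) // | m w' H'm Nw' _ split_w].
have [_ m0 _] := sub _ H'm.
case: (split_w m w' (H'M _ H'm) (proj2 (H'gen w') Nw') erefl) => // ->.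
by rewrite vadd0r.
Qed.

Lemma irreducible_not_Ncomb M u :
  irreducible M u -> ~ M u -> (forall m, M m -> m <> vzero V) -> ~ Ncomb M u.
Proof.
move=> [_ u0 split_u] notM nz Nu; move: u0 split_u notM.
case: Nu => [/(_ erefl) // | m w Mm Nw _ split_u notM].
have Nm : Nbar M m by apply/Nbar_of_Ncomb/Ncomb_single.
case: (split_u m w Nm (Nbar_of_Ncomb Nw) erefl) => [/(nz m Mm) //|w0].
by apply: notM; rewrite w0 vadd0r.
Qed.

Definition vsum (s : seq (vec V)) : vec V := foldr (@vadd V) (vzero V) s.

Lemma vsumE s : (forall e, (vsum s).1 e = \sum_(u <- s) u.1 e) /\
                (forall c, (vsum s).2 c = \sum_(u <- s) u.2 c).
Proof.
elim: s => [|u s [IH1 IH2]]; first by split=> x; rewrite big_nil /= ffunE.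
by split=> x; rewrite big_cons /= ffunE ?IH1 ?IH2.
Qed.

Lemma Ncomb_vsum M (I : Type) (F : I -> vec V) (s : seq I) :
  (forall i, Ncomb M (F i)) -> Ncomb M (vsum (map F s)).
Proof. by move=> NF; elim: s => [|i s IH] /=; [apply: Ncomb0 | apply: Ncomb_add]. Qed.

End VectorMonoid.

(* An element w of N(PM(V))
   is a sum of vectors chi_{q,c}; grouping the matchings q by their partition
   c gives, for each c, a multigraph Y c that only uses edges crossing c and
   is regular of degree w(c), and these multigraphs add up to w|_K. *)
Section PartitionSplit.
Variable V : finType.

Definition crosses (c : eqpart V) (e : edge V) : bool :=
  [forall P in val c, #|val e :&: P| == 1].

Definition splits (w : vec V) (Y : eqpart V -> edge V -> nat) : Prop :=
  [/\ forall e, \sum_c Y c e = w.1 e,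
      forall c (x : V), \sum_(e : edge V | x \in val e) Y c e = w.2 c &
      forall c e, ~~ crosses c e -> Y c e = 0].

Lemma sum_delta (T : finType) (a : T) k : \sum_(c : T) (c == a) * k = k.
Proof. by rewrite (bigD1 a) //= eqxx mul1n big1 ?addn0 // => c /negbTE ->. Qed.

Lemma Ncomb_PM_splits w : Ncomb (@PM V) w -> exists Y, splits w Y.
Proof.
elim=> [|_ u [c0 [q [/andP[cross_q deg_q] ->]]] _ [Y [sumY degY crossY]]].
  by exists (fun (_ : eqpart V) (_ : edge V) => 0); split=> [e|c x|//]; rewrite big1 //= ffunE.
exists (fun c e => (c == c0) * (e \in q) + Y c e); split.
- by move=> e; rewrite big_split /= sum_delta sumY /= !ffunE.
- move=> c x; rewrite big_split /= -big_distrr /= degY /= !ffunE.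
  suff -> : \sum_(e : edge V | x \in val e) nat_of_bool (e \in q) = 1.
    by rewrite muln1.
  have /forallP /(_ x) /eqP deg_x := deg_q.
  apply: etrans _ deg_x; rewrite -sum1_card [RHS]big_mkcond /=.
  rewrite big_mkcond; apply: eq_bigr => e _.
  by rewrite inE andbC; case: (x \in val e); case: (e \in q).
- move=> c e not_cross; rewrite crossY // addn0.
  apply/eqP; rewrite muln_eq0 !eqb0 -negb_and; apply: contra not_cross => /andP[/eqP -> e_q].
  exact: (forall_inP cross_q e e_q).
Qed.

Lemma Nbar_PM_splits a :
  Nbar (@PM V) a -> exists k Y, 0 < k /\ splits (vscale k a) Y.
Proof. by move=> [k [k0 /Ncomb_PM_splits [Y sY]]]; exists k, Y. Qed.

Lemma PM_neq0 m : PM m -> m <> vzero V.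
Proof. by case=> c [q [_ ->]] /(congr1 (fun w : vec V => w.2 c)); rewrite /= !ffunE eqxx. Qed.

Lemma splits_deg0 w Y c : splits w Y -> w.2 c = 0 -> forall e, Y c e = 0.
Proof.
move=> [_ degY _] w0 e; have : 0 < #|val e| by rewrite (eqP (valP e)).
case/card_gt0P=> x xe; apply/eqP; rewrite -leqn0 -w0 -(degY c x).
by rewrite (bigD1 e) ?leq_addr.
Qed.

Lemma Nbar_PM_eq0 a : Nbar (@PM V) a -> (forall c, a.2 c = 0) -> a = vzero V.
Proof.
move=> /Nbar_PM_splits [k [Y [k0 sY]]] a2_0.
have Y0 c : forall e, Y c e = 0 by apply: (splits_deg0 sY); rewrite /= ffunE a2_0 muln0.
apply: vecP => [e|c] /=; rewrite ffunE ?a2_0 //.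
case: sY => sumY _ _; have := sumY e; rewrite big1 // /= ffunE.
by move/esym/eqP; rewrite muln_eq0 (negbTE (lt0n_neq0 k0)) => /eqP.
Qed.

End PartitionSplit.

Section InjectiveLabelling.
Variables (I J : finType) (f : I -> J).
Hypothesis f_inj : injective f.

Lemma sum_label (P : pred J) (F : J -> nat) :
  (forall j, j \notin f @: setT -> F j = 0) ->
  \sum_(j | P j) F j = \sum_(i | P (f i)) F (f i).
Proof.
move=> F0; rewrite (bigID (mem (f @: setT))) /= [X in _ + X]big1 ?addn0; last first.
  by move=> j /andP[_ /F0].
rewrite (eq_bigl (fun j : J => (j \in f @: setT) && P j)); last by move=> j; rewrite andbC.
rewrite big_imset_cond => [|i j _ _ /f_inj //].
by apply: eq_bigl => i; rewrite inE.
Qed.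

Lemma card_label (A : {set I}) (P : pred J) :
  #|[set j in f @: A | P j]| = #|[set i in A | P (f i)]|.
Proof.
rewrite -(card_imset _ f_inj); apply: eq_card => j; rewrite !inE.
apply/andP/imsetP => [[/imsetP [i Ai ->] Pfi]|[i]]; first by exists i; rewrite // inE Ai.
by rewrite inE => /andP[Ai Pfi] ->; rewrite imset_f.
Qed.

End InjectiveLabelling.

Lemma card2I (T : finType) (a b : T) (S : {set T}) :
  a != b -> #|[set a; b] :&: S| = (a \in S) + (b \in S).
Proof.
move=> ab; rewrite setIUl cardsU.
have card1I x : #|[set x] :&: S| = (x \in S).
  case: (boolP (x \in S)) => xS; last by rewrite disjoint_setI0 ?cards0 // disjoints1.
  by rewrite (setIidPl _) ?cards1 // sub1set.
rewrite !card1I; suff -> : [set a] :&: S :&: ([set b] :&: S) = set0 by rewrite cards0 subn0.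
by apply/setP => y; rewrite !inE; case: eqP => // ->; rewrite (negbTE ab) andbF.
Qed.

Lemma crosses_pair (V : finType) (c : eqpart V) (H : {set V}) (e : edge V) a b :
  val c = [set H; ~: H] -> val e = [set a; b] -> a != b ->
  crosses c e = ((a \in H) != (b \in H)).
Proof.
move=> c_def e_def ab; rewrite /crosses c_def e_def.
apply/forall_inP/idP => [/(_ H (set21 _ _))|].
  by rewrite card2I //; case: (a \in H); case: (b \in H).
move=> cross_ab P; rewrite !inE => /orP[] /eqP ->; rewrite card2I // ?inE;
  by move: cross_ab; case: (a \in H); case: (b \in H).
Qed.

(* Cells of an arbitrary
   type T carry natural numbers g i, and each constraint is a list of cells
   whose values sum to a fixed K > 0.  We record facts "g i = 0" (false) and
   "g i = K" (true) and propagate them: a cell known to be K forces the other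
   cells of its constraints to 0, and a constraint whose cells are all known
   to be 0 but one forces that one to K.  When propagation stalls we branch on
   a cell known to take only the values 0 or K. *)
Section UnitPropagation.
Variable T : eqType.

Definition facts := seq (T * bool).

Fixpoint lookup (s : facts) (i : T) : option bool :=
  if s is (j, b) :: s' then if j == i then Some b else lookup s' i else None.

Definition assign (s : facts) (i : T) (b : bool) : option facts :=
  match lookup s i with
  | Some b' => if b' == b then Some s else None
  | None => Some ((i, b) :: s)
  end.

Fixpoint assign_all (s : facts) (l : seq T) (b : bool) : option facts :=
  if l is i :: l' then obind (fun s' => assign_all s' l' b) (assign s i b) else Some s.

Definition propagate (s : facts) (cs : seq T) : option facts :=
  match [seq i <- cs | lookup s i == Some true] with
  | j :: _ => assign_all s (rem j cs) false
  | [::] => match [seq i <- cs | lookup s i != Some false] with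
            | [::] => None
            | [:: j] => assign s j true
            | _ => Some s
            end
  end.

Definition sweep (C : seq (seq T)) (s : facts) : option facts :=
  foldl (fun o cs => obind (propagate^~ cs) o) (Some s) C.

Fixpoint refute (C : seq (seq T)) (br : seq T) (fuel : nat) (s : facts) : bool :=
  if fuel is n.+1 then
    if sweep C s is Some s' then
      if size s < size s' then refute C br n s'
      else if [seq i <- br | lookup s' i == None] is i :: _ then
        refute C br n ((i, false) :: s') && refute C br n ((i, true) :: s')
      else false
    else true
  else false.

Variables (K : nat) (g : T -> nat).
Hypothesis K_gt0 : 0 < K.

Definition value (b : bool) := if b then K else 0.

(* All recorded facts hold for g; [ok None] means a contradiction. *)
Definition consistent (s : facts) := all (fun p => g p.1 == value p.2) s.
Definition ok (o : option facts) : Prop :=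
  if o is Some s then is_true (consistent s) else False.

Lemma lookup_sound s i b : consistent s -> lookup s i = Some b -> g i = value b.
Proof.
elim: s => [|[j b'] s IH] //= /andP[/eqP gj cs].
by case: eqP => [<- [<-] // | _]; apply: IH.
Qed.

Lemma assign_sound s i b : consistent s -> g i = value b -> ok (assign s i b).
Proof.
move=> cs gi; rewrite /assign; case E: (lookup s i) => [b'|] /=; last by rewrite gi eqxx.
have := lookup_sound cs E; rewrite gi; case: eqP => //= ne.
by case: b b' ne {E gi} => [] [] //= _; move: K_gt0; case: K.
Qed.

Lemma assign_all_sound s l b :
  consistent s -> (forall i, i \in l -> g i = value b) -> ok (assign_all s l b).
Proof.
elim: l s => [|i l IH] s cs gl //=.
have := assign_sound cs (gl i (mem_head _ _)); case: (assign s i b) => //= s' cs'.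
by apply: IH => // j jl; apply: gl; rewrite inE jl orbT.
Qed.

Lemma propagate_sound s cs :
  consistent s -> \sum_(i <- cs) g i = K -> ok (propagate s cs).
Proof.
move=> cons_s sum_cs; rewrite /propagate.
case Et: [seq i <- cs | lookup s i == Some true] => [|j l].
  case En: [seq i <- cs | lookup s i != Some false] => [|j [|]] //.
  - have sum0 : \sum_(i <- cs) g i = 0.
      rewrite big_seq big1 // => i ics.
      have : i \notin [seq i <- cs | lookup s i != Some false] by rewrite En.
      by rewrite mem_filter ics andbT negbK => /eqP /(lookup_sound cons_s).
    by move: K_gt0; rewrite -sum_cs sum0.
  - apply: assign_sound => //=; rewrite -sum_cs (bigID (fun i => lookup s i != Some false)) /=.
    rewrite -big_filter En big_seq1 big1 ?addn0 //.
    by move=> i; rewrite negbK => /eqP /(lookup_sound cons_s).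
have : j \in [seq i <- cs | lookup s i == Some true] by rewrite Et mem_head.
rewrite mem_filter => /andP[/eqP /(lookup_sound cons_s) gj jcs].
apply: assign_all_sound => // i irem; apply/eqP.
have := sum_cs; rewrite (big_rem _ jcs) /= gj => /eqP; rewrite -[X in _ == X]addn0 eqn_add2l.
by rewrite sum_nat_seq_eq0 => /allP /(_ i irem).
Qed.

Lemma sweep_sound C s :
  (forall cs, cs \in C -> \sum_(i <- cs) g i = K) -> consistent s -> ok (sweep C s).
Proof.
move=> sumC cons_s; rewrite /sweep; have : ok (Some s) by [].
elim: C sumC (Some s) => [|cs C IH] sumC o o_ok //=.
apply: IH => [cs' cs'C|]; first by apply: sumC; rewrite inE cs'C orbT.
by case: o o_ok => //= s' cons_s'; apply: propagate_sound => //; apply: sumC; rewrite mem_head.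
Qed.

Lemma refute_sound C br fuel s :
  (forall cs, cs \in C -> \sum_(i <- cs) g i = K) ->
  (forall i, i \in br -> g i = 0 \/ g i = K) ->
  consistent s -> refute C br fuel s -> False.
Proof.
move=> sumC br01; elim: fuel s => [|n IH] s cons_s //=.
have := sweep_sound sumC cons_s; case: (sweep C s) => // s' cons_s'.
case: ifP => [_|_]; first exact: IH.
case Eb: [seq i <- br | _] => [|i l] // /andP[ref0 ref1].
have : i \in br by have := mem_head i l; rewrite -Eb mem_filter => /andP[].
case/br01 => gi; [apply: (IH _ _ ref0) | apply: (IH _ _ ref1)]; by rewrite /= cons_s' gi eqxx.
Qed.

End UnitPropagation.

Lemma all_iota_ord k (P : pred nat) : all P (iota 0 k) -> forall i : 'I_k, P i.
Proof. by move/allP=> allP i; apply: allP; rewrite mem_iota ltn_ord. Qed.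

Lemma sum_iota_ord k (P : pred nat) (F : nat -> nat) :
  \sum_(i <- iota 0 k | P i) F i = \sum_(i < k | P i) F i.
Proof. by rewrite -big_mkord /index_iota subn0. Qed.

Lemma card_ord_count k (P : pred nat) : #|[set i : 'I_k | P i]| = count P (iota 0 k).
Proof.
rewrite cardsE -sum1_card -sum1_count sum_iota_ord.
by apply: eq_bigl => i; rewrite unfold_in.
Qed.

(* V = {0,...,19}; the graph has sides {0,...,9} and {10,...,19}
   and 30 edges, numbered so that edge n joins vertex n / 3 to the (n mod 3)-th
   entry of row n / 3 of [nbrs].  All finite checks below are computations on
   natural numbers, which are then transported to the finite types. *)
Definition nbrs : seq (seq nat) :=
  [:: [:: 10; 15; 16]; [:: 11; 13; 14]; [:: 11; 15; 18]; [:: 16; 17; 19];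
      [:: 14; 18; 19]; [:: 11; 12; 14]; [:: 12; 15; 16]; [:: 12; 13; 17];
      [:: 10; 13; 19]; [:: 10; 17; 18]].

Definition tl (n : nat) : nat := n %/ 3.
Definition hd (n : nat) : nat := nth 0 (nth [::] nbrs (n %/ 3)) (n %% 3).
Definition incident (x n : nat) : bool := (x == tl n) || (x == hd n).

Definition sides : seq (seq nat) :=
  [:: [:: 0; 2; 3; 4; 6; 10; 11; 13; 14; 17];
      [:: 1; 4; 6; 9; 10; 11; 12; 15; 17; 19];
      [:: 2; 4; 5; 7; 8; 10; 14; 15; 16; 17]].

Definition in_side (t x : nat) : bool := x \in nth [::] sides t.
Definition cross (t n : nat) : bool := in_side t (tl n) != in_side t (hd n).

(* Two perfect matchings of the graph inside each B_{c_t}: the matching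
   (t, s) uses, at the vertex x < 10, its edge number nth 0 (choice t s) x. *)
Definition choices : seq (seq nat) :=
  [:: [:: 2; 0; 1; 2; 1; 2; 0; 1; 0; 1]; [:: 1; 0; 2; 0; 2; 2; 0; 2; 1; 0];
      [:: 0; 1; 1; 1; 0; 0; 2; 0; 2; 2]; [:: 1; 1; 0; 2; 0; 1; 2; 2; 0; 2];
      [:: 0; 2; 0; 0; 1; 1; 1; 1; 2; 1]; [:: 2; 2; 2; 1; 2; 0; 1; 0; 1; 0]].

Definition in_matching (t : nat) (s : bool) (n : nat) : bool :=
  n %% 3 == nth 0 (nth [::] choices (t.*2 + s)) (n %/ 3).

Lemma ends_check : all (fun n => [&& tl n < 10, 10 <= hd n & hd n < 20]) (iota 0 30).
Proof. by vm_compute. Qed.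
Lemma ends_inj_check : all (fun m => all (fun n =>
  incident (tl m) n && incident (hd m) n ==> (m == n)) (iota 0 30)) (iota 0 30).
Proof. by vm_compute. Qed.
Lemma cubic_check : all (fun x => count (incident x) (iota 0 30) == 3) (iota 0 20).
Proof. by vm_compute. Qed.
Lemma side_check : all (fun t => count (in_side t) (iota 0 20) == 10) (iota 0 3).
Proof. by vm_compute. Qed.
Lemma side_inj_check : all (fun t => all (fun t' => (t != t') ==>
  has (fun x => in_side t x != in_side t' x) (iota 0 20) &&
  has (fun x => in_side t x == in_side t' x) (iota 0 20)) (iota 0 3)) (iota 0 3).
Proof. by vm_compute. Qed.
Lemma matching_check : all (fun t => all (fun s =>
  all (fun n => in_matching t s n ==> cross t n) (iota 0 30) &&
  all (fun x => count (fun n => in_matching t s n && incident x n) (iota 0 30) == 1)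
      (iota 0 20)) [:: false; true]) (iota 0 3).
Proof. by vm_compute. Qed.
Lemma cover_check : all (fun n =>
  sumn [seq in_matching t false n + in_matching t true n | t <- iota 0 3] == 2) (iota 0 30).
Proof. by vm_compute. Qed.

(* Cell (t, n)
   holds the weight of edge n in row t; the constraints say that each edge
   carries total weight K over the three rows and that each row is K-regular
   at each vertex; initially the cells of edges not crossing c_t are 0, and
   the search branches on the cells of row i. *)
Definition cell_constraints : seq (seq (nat * nat)) :=
  [seq [seq (t, n) | t <- iota 0 3] | n <- iota 0 30] ++
  [seq [seq (t, n) | n <- iota 0 30 & incident x n] | t <- iota 0 3, x <- iota 0 20].
Definition initial_facts : facts (nat * nat)%type :=
  [seq ((t, n), false) | t <- iota 0 3, n <- [seq n <- iota 0 30 | ~~ cross t n]].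
Lemma refute_check : all (fun i =>
  refute cell_constraints [seq (i, n) | n <- iota 0 30] 100 initial_facts) (iota 0 3).
Proof. by vm_compute. Qed.

Lemma tl_hd_range (n : 'I_30) : [&& tl n < 10, 10 <= hd n & hd n < 20].
Proof. exact: all_iota_ord ends_check n. Qed.

Definition ends (n : 'I_30) : {set 'I_20} := [set inord (tl n); inord (hd n)].

Lemma mem_ends (x : 'I_20) (n : 'I_30) : (x \in ends n) = incident x n.
Proof.
have /and3P[tl10 _ hd20] := tl_hd_range n; have tl20 : tl n < 20 by lia.
by rewrite !inE -!val_eqE /= !inordK.
Qed.

Lemma ends_neq (n : 'I_30) : inord (tl n) != inord (hd n) :> 'I_20.
Proof.
have /and3P[tl10 hd10 hd20] := tl_hd_range n; have tl20 : tl n < 20 by lia.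
by rewrite -val_eqE /= !inordK // neq_ltn (leq_trans tl10 hd10).
Qed.

Lemma ends_card (n : 'I_30) : #|ends n| == 2.
Proof. by rewrite cards2 ends_neq. Qed.

Definition mk (n : 'I_30) : edge 'I_20 := exist _ (ends n) (ends_card n).

Lemma mk_inj : injective mk.
Proof.
move=> m n /(congr1 val) /= ends_mn; apply/val_inj/eqP.
have /and3P[tl10 _ hd20] := tl_hd_range m; have tl20 : tl m < 20 by lia.
have mem_n x : x \in ends m -> incident x n by rewrite ends_mn mem_ends.
have := all_iota_ord ends_inj_check m => /allP /(_ n); rewrite mem_iota ltn_ord.
move=> /(_ isT) /implyP; apply; apply/andP; split.
  by have := mem_n _ (set21 _ _); rewrite /= inordK.
by have := mem_n _ (set22 _ _); rewrite /= inordK.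
Qed.

Lemma deg_label (P : pred nat) (x : 'I_20) :
  #|[set e in mk @: [set n : 'I_30 | P n] | x \in val e]|
  = count (fun n => P n && incident x n) (iota 0 30).
Proof.
rewrite (card_label mk_inj) -card_ord_count.
by apply: eq_card => n; rewrite !inE -mem_ends !inE.
Qed.

Definition E : {set edge 'I_20} := mk @: [set n : 'I_30 | true].

Lemma cubic_E : cubic E.
Proof.
move=> x; rewrite /deg /E (deg_label xpredT).
by apply/eqP; apply: (all_iota_ord cubic_check x).
Qed.

Lemma bipartite_E : bipartite E.
Proof.
exists [set x : 'I_20 | x < 10]; move=> _ /imsetP [n _ ->].
have /and3P[tl10 hd10 hd20] := tl_hd_range n; have tl20 : tl n < 20 by lia.
rewrite /= card2I ?ends_neq // !inE !inordK // tl10.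
by rewrite ltnNge hd10.
Qed.

Definition side (t : 'I_3) : {set 'I_20} := [set x : 'I_20 | in_side t x].

Lemma cp_proof (t : 'I_3) : is_eqpart [set side t; ~: side t].
Proof.
apply/existsP; exists (side t); rewrite eqxx card_ord card_ord_count.
by have /eqP -> := all_iota_ord side_check t.
Qed.

Definition cp (t : 'I_3) : eqpart 'I_20 := exist _ [set side t; ~: side t] (cp_proof t).

Lemma cp_inj : injective cp.
Proof.
move=> t t' /(congr1 val) /= cp_tt'; apply/eqP; apply: contraT => ne.
have /allP /(_ t') := all_iota_ord side_inj_check t; rewrite mem_iota ltn_ord.
move=> /(_ isT); rewrite ne => /andP[/hasP [x x20 diff] /hasP [y y20 same]].
rewrite !mem_iota /= in x20 y20.
have : side t \in [set side t'; ~: side t'] by rewrite -cp_tt' set21.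
rewrite !inE => /orP[] /eqP side_t.
  move: diff; have := congr1 (fun S : {set 'I_20} => inord x \in S) side_t.
  by rewrite /= !inE !inordK // => ->; rewrite eqxx.
move: same; have := congr1 (fun S : {set 'I_20} => inord y \in S) side_t.
by rewrite /= !inE !inordK // => ->; case: (in_side t' y).
Qed.

Lemma crosses_cp t n : crosses (cp t) (mk n) = cross t n.
Proof.
have /and3P[tl10 _ hd20] := tl_hd_range n; have tl20 : tl n < 20 by lia.
rewrite (crosses_pair (H := side t) (a := inord (tl n)) (b := inord (hd n))) //.
  by rewrite !inE !inordK.
exact: ends_neq.
Qed.

Definition matching (t : 'I_3) (s : bool) : {set edge 'I_20} :=
  mk @: [set n : 'I_30 | in_matching t s n].

Lemma matching_pm t s : is_pm (cp t) (matching t s).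
Proof.
have /allP /(_ s) := all_iota_ord matching_check t.
have s_in : s \in [:: false; true] by case: s.
move=> /(_ s_in) /andP[cross_ok deg_ok]; apply/andP; split.
  apply/forall_inP => _ /imsetP [n n_in ->]; rewrite inE in n_in.
  by have := crosses_cp t n; rewrite /crosses => ->; apply: (implyP (all_iota_ord cross_ok n)).
by apply/forallP => x; rewrite deg_label; apply: (all_iota_ord deg_ok x).
Qed.

Definition C3 : {set eqpart 'I_20} := cp @: setT.
Definition v : vec 'I_20 := (chiE E, [ffun c => nat_of_bool (c \in C3)]).

Lemma v1E e : v.1 e = (e \in E).
Proof. by rewrite /= ffunE. Qed.

Lemma v1_mk n : v.1 (mk n) = 1.
Proof. by rewrite v1E /E (mem_imset _ _ mk_inj) inE. Qed.

Lemma v2E c : v.2 c = (c \in C3).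
Proof. by rewrite /= ffunE. Qed.

Lemma v2_cp t : v.2 (cp t) = 1.
Proof. by rewrite v2E /C3 (mem_imset _ _ cp_inj) inE. Qed.

Lemma Ev_v : Ev v = E.
Proof. by apply/setP => e; rewrite inE /= ffunE; case: (e \in E). Qed.

Lemma sum_indicator (T : finType) (A : {set T}) : \sum_x nat_of_bool (x \in A) = #|A|.
Proof. by rewrite -sum1_card [RHS]big_mkcond. Qed.

Lemma problem_v : problem v.
Proof.
split; first by move=> e; rewrite /= ffunE leq_b1.
split; first by rewrite Ev_v => x y; rewrite !cubic_E.
have -> : \sum_e v.1 e = #|E|.
  by rewrite -sum_indicator; apply: eq_bigr => e _; rewrite ffunE.
have -> : \sum_c v.2 c = #|C3|.
  by rewrite -sum_indicator; apply: eq_bigr => c _; rewrite ffunE.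
by rewrite (card_imset _ cp_inj) (card_imset _ mk_inj) (card_ord_count 30 xpredT)
  cardsT !card_ord count_predT size_iota.
Qed.

Lemma sum_cp c : \sum_t nat_of_bool (c == cp t) = (c \in C3).
Proof.
case: (boolP (c \in C3)) => [/imsetP [t0 _ ->]|c_out].
  rewrite (bigD1 t0) //= eqxx big1 // => t; rewrite eq_sym (inj_eq cp_inj).
  by move=> /negbTE ->.
rewrite big1 // => t _; apply/eqP; rewrite eqb0; apply/negP => /eqP c_t.
by rewrite c_t imset_f in c_out.
Qed.

Lemma mem_matching t s n : (mk n \in matching t s) = in_matching t s n.
Proof. by rewrite /matching (mem_imset _ _ mk_inj) inE. Qed.

Lemma double_v : Ncomb (@PM 'I_20) (vscale 2 v).
Proof.
pose chi t s := chiEc (matching t s) (cp t).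
pose F t := vadd (chi t false) (chi t true).
have PM_chi t s : Ncomb (@PM 'I_20) (chi t s).
  by apply: Ncomb_single; exists (cp t), (matching t s); split=> //; apply: matching_pm.
suff -> : vscale 2 v = vsum (map F (index_enum 'I_3)).
  by apply: Ncomb_vsum => t; apply: Ncomb_add.
have [vs1 vs2] := vsumE (map F (index_enum 'I_3)).
have [scale1 scale2] := vscaleE 2 v.
apply: vecP => [e|c]; rewrite ?vs1 ?vs2 ?scale1 ?scale2 ?v1E ?v2E big_map /=.
  under eq_bigr do rewrite !ffunE.
  case: (boolP (e \in E)) => [/imsetP [n _ ->]|e_out]; last first.
    have notin t s : e \notin matching t s.
      by apply: contra e_out; apply/subsetP/imsetS/subsetP => m; rewrite inE.
    by rewrite big1 // => t _; rewrite !(negbTE (notin _ _)).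
  under eq_bigr do rewrite !mem_matching.
  rewrite -(sum_iota_ord 3 xpredT (fun t => in_matching t false n + in_matching t true n)).
  apply/esym/eqP; have := all_iota_ord cover_check n.
  by rewrite sumnE big_map muln1.
under eq_bigr do rewrite !ffunE.
by rewrite big_split /= sum_cp mul2n addnn.
Qed.

Lemma Nbar_v : Nbar (@PM 'I_20) v.
Proof. by exists 2; split=> //; apply: double_v. Qed.

Lemma not_PM_v : ~ PM v.
Proof.
case=> c [q [_ v_eq]]; have := v2_cp ord0; have := v2_cp ord_max.
rewrite v_eq /= !ffunE; case: eqP => [<-|] //; case: eqP => // /cp_inj.
by move/(congr1 val).
Qed.

Lemma table_of_summand (a : vec 'I_20) :
  Nbar (@PM 'I_20) a -> (forall e, a.1 e <= v.1 e) -> (forall c, a.2 c <= v.2 c) ->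
  exists k (Y : 'I_3 -> 'I_30 -> nat), [/\ 0 < k,
    forall n, \sum_t Y t n = k * a.1 (mk n),
    forall t (x : 'I_20), \sum_(n | x \in ends n) Y t n = k * a.2 (cp t) &
    forall (t : 'I_3) (n : 'I_30), ~~ cross t n -> Y t n = 0].
Proof.
move=> /Nbar_PM_splits [k [Y [k0 splitY]]] a1_le a2_le.
have [sumY degY crossY] := splitY; have [scale1 scale2] := vscaleE k a.
have off_C3 c : c \notin C3 -> forall e, Y c e = 0.
  move=> c_out; apply: (splits_deg0 splitY).
  by move: (a2_le c); rewrite scale2 v2E (negbTE c_out) leqn0 => /eqP ->; rewrite muln0.
have off_E e : e \notin E -> forall c, Y c e = 0.
  move=> e_out c; have : \sum_c' Y c' e == 0.
    by move: (a1_le e); rewrite sumY scale1 v1E (negbTE e_out) leqn0 => /eqP ->; rewrite muln0.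
  by rewrite sum_nat_eq0 => /forallP /(_ c) /eqP.
exists k, (fun t n => Y (cp t) (mk n)); split=> //.
- move=> n; rewrite -scale1 -sumY (sum_label cp_inj xpredT) //.
  by move=> c c_out; apply: off_C3.
- move=> t x; rewrite -scale2 -(degY (cp t) x) (sum_label mk_inj (fun e => x \in val e)) //.
  by move=> e /off_E.
- by move=> t n not_cross; apply: crossY; rewrite crosses_cp.
Qed.

(* If g i only takes the values 0 and K, then g i / K
   is a perfect matching M of B_{c_i} inside E, and the remaining two rows must
   split E \ M, a union of even cycles, along c_j and c_k; on each cycle the
   values alternate, and the edges not crossing c_j or c_k force a conflict. *)
Lemma no_integral_table (K : nat) (g : 'I_3 -> 'I_30 -> nat) (i : 'I_3) :
  0 < K ->
  (forall n, \sum_t g t n = K) ->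
  (forall t (x : 'I_20), \sum_(n | x \in ends n) g t n = K) ->
  (forall (t : 'I_3) (n : 'I_30), ~~ cross t n -> g t n = 0) ->
  ~ (forall n, g i n = 0 \/ g i n = K).
Proof.
move=> K0 sum_edge sum_vertex g_cross g_i.
pose G (p : nat * nat) := g (inord p.1) (inord p.2).
have ref := all_iota_ord refute_check i.
apply: (refute_sound (g := G) K0 _ _ _ ref).
- move=> cs; rewrite mem_cat => /orP[/mapP [n n30 ->] | /allpairsP [[t x] [t3 x20 ->]]].
    rewrite big_map (sum_iota_ord 3 xpredT (fun t => G (t, n))) -(sum_edge (inord n)).
    by apply: eq_bigr => t _; rewrite /G inord_val.
  rewrite !mem_iota !add0n in t3 x20; rewrite big_map big_filter sum_iota_ord.
  rewrite -(sum_vertex (inord t) (inord x)); apply: eq_big => [n|n _].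
    by rewrite mem_ends inordK.
  by rewrite /G inord_val.
- move=> p /mapP [n n30 ->].
  by rewrite /G inord_val; apply: g_i.
- rewrite /consistent /initial_facts; apply/allP => _ /allpairsPdep [t [n [t3 n_in ->]]].
  rewrite mem_filter mem_iota add0n in n_in; rewrite mem_iota add0n in t3.
  case/andP: n_in => not_cross n30.
  by rewrite /G g_cross; last by rewrite !inordK.
Qed.

Lemma table_row_zero (Y : 'I_3 -> 'I_30 -> nat) t :
  (forall x : 'I_20, \sum_(n | x \in ends n) Y t n = 0) -> forall n, Y t n = 0.
Proof.
move=> deg0 n; apply/eqP; rewrite -leqn0 -(deg0 (inord (tl n))).
by rewrite (bigD1 n) ?leq_addr // /ends set21.
Qed.

(* v does not split into a summand carrying exactly one partition c_i and a
   summand carrying the other two: combining their tables would give a table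
   that is integral on row i. *)
Lemma no_single_partition_summand (a b : vec 'I_20) (i : 'I_3) :
  Nbar (@PM 'I_20) a -> Nbar (@PM 'I_20) b -> v = vadd a b ->
  (forall t, a.2 (cp t) = (t == i)) -> False.
Proof.
move=> Na Nb v_ab a_i.
have v1_ab e : v.1 e = a.1 e + b.1 e by rewrite v_ab /= ffunE.
have v2_ab c : v.2 c = a.2 c + b.2 c by rewrite v_ab /= ffunE.
have a1_le e : a.1 e <= v.1 e by rewrite v1_ab leq_addr.
have a2_le c : a.2 c <= v.2 c by rewrite v2_ab leq_addr.
have b1_le e : b.1 e <= v.1 e by rewrite v1_ab leq_addl.
have b2_le c : b.2 c <= v.2 c by rewrite v2_ab leq_addl.
have [ka [Ya [ka0 Ya_edge Ya_vert Ya_cross]]] := table_of_summand Na a1_le a2_le.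
have [kb [Yb [kb0 Yb_edge Yb_vert Yb_cross]]] := table_of_summand Nb b1_le b2_le.
have b_i t : b.2 (cp t) = (t != i).
  by have := v2_ab (cp t); rewrite v2_cp a_i; case: (t == i) => /=; lia.
have Ya0 t : t != i -> forall n, Ya t n = 0.
  by move=> ti; apply: table_row_zero => x; rewrite Ya_vert a_i (negbTE ti) muln0.
have Yb0 n : Yb i n = 0 by apply: table_row_zero => x; rewrite Yb_vert b_i eqxx muln0.
apply: (@no_integral_table (ka * kb) (fun t n => kb * Ya t n + ka * Yb t n) i).
- by rewrite muln_gt0 ka0.
- move=> n; rewrite big_split -!big_distrr /= Ya_edge Yb_edge.
  by rewrite mulnCA -!mulnDr -(v1_ab (mk n)) v1_mk muln1.
- move=> t x; rewrite big_split -!big_distrr /= Ya_vert Yb_vert.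
  by rewrite mulnCA -!mulnDr -(v2_ab (cp t)) v2_cp muln1.
- by move=> t n not_cross; rewrite Ya_cross // Yb_cross // !muln0.
move=> n; rewrite Yb0 muln0 addn0.
have : Ya i n = ka * a.1 (mk n).
  by rewrite -Ya_edge (bigD1 i) //= big1 ?addn0 // => t /Ya0 ->.
have := v1_ab (mk n); rewrite v1_mk; case: (a.1 (mk n)) => [|[|]] // _ ->.
  by left; rewrite !muln0.
by right; rewrite muln1 mulnC.
Qed.

(* v is an irreducible element of Nbar(PM(V)): in a splitting v = a + b, the
   three partitions are shared out between a and b; by the previous lemma
   neither summand receives exactly one of them, so one receives none, and a
   summand without partitions is zero. *)
Lemma irreducible_v : irreducible (@PM 'I_20) v.
Proof.
split; [exact: Nbar_v | by move=> v0; have := v2_cp ord0; rewrite v0 /= ffunE |].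
move=> a b Na Nb v_ab.
have v2_ab c : v.2 c = a.2 c + b.2 c by rewrite v_ab /= ffunE.
pose S := [set t | a.2 (cp t) == 1].
have aS t : a.2 (cp t) = (t \in S).
  by have := v2_ab (cp t); rewrite v2_cp inE; case: (a.2 (cp t)) => [|[|]].
have bS t : b.2 (cp t) = (t \in ~: S).
  by have := v2_ab (cp t); rewrite v2_cp aS in_setC; case: (t \in S) => /=; lia.
have no_partition_zero (w : vec 'I_20) (A : {set 'I_3}) :
    Nbar (@PM 'I_20) w -> (forall c, w.2 c <= v.2 c) ->
    (forall t, w.2 (cp t) = (t \in A)) -> #|A| = 0 -> w = vzero _.
  move=> Nw w_le w_A /eqP; rewrite cards_eq0 => /eqP A0; apply: (Nbar_PM_eq0 Nw) => c.
  case: (boolP (c \in C3)) => [/imsetP [t _ ->]|c_out]; first by rewrite w_A A0 inE.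
  by apply/eqP; rewrite -leqn0 (leq_trans (w_le c)) // v2E (negbTE c_out).
have [S0|S_pos] := posnP #|S|.
  by left; apply: (no_partition_zero a S) => // c; rewrite v2_ab leq_addr.
have [Sc0|Sc_pos] := posnP #|~: S|.
  by right; apply: (no_partition_zero b (~: S)) => // c; rewrite v2_ab leq_addl.
have := cardsC S; rewrite card_ord => cardS.
have /orP[/cards1P [i Si] | /cards1P [i Sci]] : (#|S| == 1) || (#|~: S| == 1) by lia.
  by exfalso; apply: (no_single_partition_summand Na Nb v_ab) => t; rewrite aS Si inE.
exfalso; apply: (no_single_partition_summand (i := i) Nb Na) => [|t].
  by rewrite vaddC.
by rewrite bS Sci inE.
Qed.

Theorem mainTheorem14 :
  exists (V : finType) (v : vec V),
    #|V| = 20 /\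
    Nbar (@PM V) v /\ problem v /\ Ncomb (@PM V) (vscale 2 v) /\
    additional_generator v /\
    cubic (Ev v) /\ bipartite (Ev v) /\ ~ Bfactorizable (Ev v).
Proof.
exists ('I_20 : finType), v; rewrite Ev_v.
split; first by rewrite card_ord.
split; first exact: Nbar_v.
split; first exact: problem_v.
split; first exact: double_v.
split; first by split; [exact: irreducible_in_hilbert_basis irreducible_v | exact: not_PM_v].
split; first exact: cubic_E.
split; first exact: bipartite_E.
move=> Bfact; apply: (irreducible_not_Ncomb irreducible_v not_PM_v (@PM_neq0 _)).
by apply: Bfact; [exact: Nbar_v | apply/ffunP => e; rewrite !ffunE].
Qed.
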